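(* Let $k$, $\Lambda_{\mathbf q}$, $G$, $\chi_{g,l}$, $\mathbb K$, $\Delta_{\mathbb K}$ and the cochains $(x^\alpha\otimes g)\epsilon_\beta^*$ be as in the context, and let the cup product of cochains $f,g'\in\operatorname{Hom}_{\Lambda_{\mathbf q}^e}(\mathbb K,\Lambda_{\mathbf q}\rtimes G)$ be $f\smile g'=\mu\circ(f\otimes_{\Lambda_{\mathbf q}}g')\circ\Delta_{\mathbb K}$, where $\mu$ is multiplication in $\Lambda_{\mathbf q}\rtimes G$. If $\alpha,\gamma\in\{0,1\}^n$, $\beta,\kappa\in\mathbb N^n$ and $g,h\in G$, then $$(x^\alpha\otimes g)\epsilon_\beta^*\smile(x^\gamma\otimes h)\epsilon_\kappa^*=\prod_{l=1}^n\Big(\chi_{g,l}^{\gamma_l}\prod_{k<l}q_{k,l}^{\kappa_k\beta_l-\gamma_k\alpha_l}(-1)^{-\gamma_k\alpha_l}\Big)(x^{\alpha+\gamma}\otimes gh)\epsilon_{\beta+\kappa}^*.$$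
   Context: $k$ is a field of characteristic $0$. Fix $n\ge1$, $q_{i,j}\in k^*$ with $q_{j,i}=q_{i,j}^{-1}$, $q_{i,i}=-1$, and $\Lambda_{\mathbf q}=k\langle x_1,\dots,x_n\mid x_ix_j=-q_{i,j}x_jx_i,\ x_i^2=0\rangle$. For $\alpha\in\mathbb N^n$, $x^\alpha=x_1^{\alpha_1}\cdots x_n^{\alpha_n}$ (which is $0$ if some $\alpha_i\ge2$). $G$ is a finite group acting by algebra automorphisms with ${}^gx_i=\chi_{g,i}x_i$. $\Lambda_{\mathbf q}\rtimes G=\Lambda_{\mathbf q}\otimes kG$ with $(\lambda\otimes g)(\lambda'\otimes h)=\lambda({}^g\lambda')\otimes gh$, a $\Lambda_{\mathbf q}$-bimodule via $\lambda\mapsto\lambda\otimes1$. For $\beta\in\mathbb N^n$, $|\beta|=\sum\beta_i$, $[j]$ is the $j$-th unit vector. $\mathbb K$ is the projective $\Lambda_{\mathbf q}^e$-resolution of $\Lambda_{\mathbf q}$ with $\mathbb K_m=\bigoplus_{|\beta|=m}\Lambda_{\mathbf q}\epsilon_\beta\Lambda_{\mathbf q}$ (free on $\epsilon_\beta$), differential $\delta(\epsilon_\beta)=\sum_{j=1}^n\big(\prod_{l<j}q_{l,j}^{\beta_l}x_j\epsilon_{\beta-[j]}+(-1)^{\sum_{l\le j}\beta_l}\prod_{l>j}(-q_{j,l})^{\beta_l}\epsilon_{\beta-[j]}x_j\big)$ ($\epsilon_{\beta-[j]}:=0$ if $\beta_j=0$), augmentation $\epsilon_0\mapsto1$. It carries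 the diagonal $\Delta_{\mathbb K}:\mathbb K\to\mathbb K\otimes_{\Lambda_{\mathbf q}}\mathbb K$, $\Delta_{\mathbb K}(\epsilon_\beta)=\sum_{\alpha+\gamma=\beta}\prod_{1\le k<l\le n}q_{k,l}^{\gamma_k\alpha_l}\,\epsilon_\alpha\otimes_{\Lambda_{\mathbf q}}\epsilon_\gamma$ (sum over $\alpha,\gamma\in\mathbb N^n$); this corresponds to the restriction of the bar-resolution diagonal under the identification $\epsilon_\beta\mapsto 1\otimes f_\beta\otimes1$ of $\mathbb K$ with a subcomplex of the bar resolution, so the cup product defined with $\Delta_{\mathbb K}$ induces the usual cup product on $\mathrm{HH}^*(\Lambda_{\mathbf q},\Lambda_{\mathbf q}\rtimes G)$. The cochain $(x^\alpha\otimes g)\epsilon_\beta^*\in\operatorname{Hom}_{\Lambda_{\mathbf q}^e}(\mathbb K_{|\beta|},\Lambda_{\mathbf q}\rtimes G)$ sends $\epsilon_\beta\mapsto x^\alpha\otimes g$ and all other $\epsilon_{\beta'}\mapsto0$. *)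

From HB Require Import structures.
From mathcomp Require Import all_boot all_order all_algebra all_fingroup.
Set Implicit Arguments. Unset Strict Implicit. Unset Printing Implicit Defensive.
Import GRing.Theory.
Local Open Scope ring_scope.

Definition mi (n : nat) := {ffun 'I_n -> nat}.
Definition mi_add n (a b : mi n) : mi n := [ffun i => (a i + b i)%N].
Definition b2mi n (a : {ffun 'I_n -> bool}) : mi n := [ffun i => nat_of_bool (a i)].

Section Defs.
Variables (k : fieldType) (A : algType k) (n : nat).

Definition mono (x : 'I_n -> A) (a : mi n) : A := \prod_(i < n) x i ^+ a i.

(* The Lambda_q data: x_i x_j = - q_ij x_j x_i, x_i^2 = 0, and the
   monomials x^alpha, alpha in {0,1}^n, form a k-basis of A.
   (This characterizes Lambda_q up to isomorphism.) *)
Definition is_quantum_exterior (q : 'I_n -> 'I_n -> k) (x : 'I_n -> A) : Prop :=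
  [/\ forall i j, x i * x j = - (q i j) *: (x j * x i),
      forall i, x i * x i = 0,
      forall a : A, exists c : {ffun {ffun 'I_n -> bool} -> k},
        a = \sum_(al : {ffun 'I_n -> bool}) c al *: mono x (b2mi al)
    & forall c : {ffun {ffun 'I_n -> bool} -> k},
        \sum_(al : {ffun 'I_n -> bool}) c al *: mono x (b2mi al) = 0 ->
        forall al, c al = 0].

Variable gT : finGroupType.

Definition is_diag_action (act : gT -> A -> A) (x : 'I_n -> A)
    (chi : gT -> 'I_n -> k) : Prop :=
  [/\ forall g, linear (act g),
      forall g a b, act g (a * b) = act g a * act g b,
      forall g, act g 1 = 1,
      (forall a, act 1%g a = a) /\ (forall g h a, act (g * h)%g a = act g (act h a))
    & forall g i, act g (x i) = chi g i *: x i].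

(* Lambda_q \rtimes G = Lambda_q (x) kG, an element being  sum_g F(g) (x) g. *)
(* (lambda (x) g)(lambda' (x) h) = lambda (g.lambda') (x) gh *)
Definition skew_mul (act : gT -> A -> A) (F F' : {ffun gT -> A}) : {ffun gT -> A} :=
  [ffun t => \sum_(g : gT) F g * act g (F' (g^-1 * t)%g)].

Definition skew_elt (x : 'I_n -> A) (a : mi n) (g : gT) : {ffun gT -> A} :=
  [ffun h => if h == g then mono x a else 0].

(* A cochain in Hom_{Lambda^e}(K, Lambda \rtimes G) is determined by its values
   on the free generators eps_beta; we represent it by beta |-> f(eps_beta). *)
Definition cochain := mi n -> {ffun gT -> A}.

Definition basic_cochain (x : 'I_n -> A) (a : mi n) (g : gT) (b : mi n) : cochain :=
  fun b' => if b' == b then skew_elt x a g else 0.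

(* coefficient of eps_alpha (x) eps_gamma in Delta_K(eps_beta) *)
Definition delta_coef (q : 'I_n -> 'I_n -> k) (a c : mi n) : k :=
  \prod_(l < n) \prod_(kk < n | (kk < l)%N) q kk l ^+ (c kk * a l).

(* cup product (f cup f')(eps_nu) = mu((f (x) f')(Delta_K eps_nu))
   = sum_{alpha + gamma = nu} coef * f(eps_alpha) f'(eps_gamma). *)
Definition cup (q : 'I_n -> 'I_n -> k) (act : gT -> A -> A) (f f' : cochain) : cochain :=
  fun nu =>
    \sum_(a : {ffun 'I_n -> 'I_(\sum_(i < n) nu i).+1} | [forall i, (a i <= nu i)%N])
      let al : mi n := [ffun i => val (a i)] in
      let ga : mi n := [ffun i => (nu i - a i)%N] in
      delta_coef q al ga *: skew_mul act (f al) (f' ga).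

End Defs.

(* Both cochains are supported on a single generator, so in Delta(eps_(beta+kappa))
   only the term eps_beta (x) eps_kappa contributes, with coefficient
   prod_(k<l) q_(k,l)^(kappa_k beta_l).  What remains is a product in the skew group
   algebra: (x^alpha (x) g)(x^gamma (x) h) = x^alpha (g.x^gamma) (x) gh, and
   g.x^gamma = prod_l chi_(g,l)^(gamma_l) x^gamma.  Sorting x^alpha x^gamma into
   x^(alpha+gamma) moves each x_l^(alpha_l) past x_k^(gamma_k) for k < l, at the cost
   (-q_(l,k))^(alpha_l gamma_k) = (-1)^(gamma_k alpha_l) q_(k,l)^(-gamma_k alpha_l).
   Only the commutation relations and q_(l,k) = q_(k,l)^-1 are used. *)

From HB Require Import structures.
From mathcomp Require Import all_boot all_order all_algebra all_fingroup.
Import GRing.Theory.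
Set Implicit Arguments. Unset Strict Implicit. Unset Printing Implicit Defensive.
Local Open Scope ring_scope.

Section SkewCommutation.
Variables (k : fieldType) (A : algType k).

Lemma scommrX (u v : A) (c : k) : u * v = c *: (v * u) ->
  forall m p, u ^+ m * v ^+ p = c ^+ (m * p) *: (v ^+ p * u ^+ m).
Proof.
move=> uv m p; elim: m => [|m IHm]; first by rewrite mul0n !expr0 mulr1 mul1r scale1r.
have uvp : u * v ^+ p = c ^+ p *: (v ^+ p * u).
  elim: p {IHm} => [|p IHp]; first by rewrite !expr0 mulr1 mul1r scale1r.
  rewrite [in LHS]exprSr mulrA IHp -scalerAl -mulrA uv -scalerAr scalerA mulrA.
  by rewrite -!exprSr.
rewrite exprS -mulrA IHm -scalerAr [in LHS]mulrA uvp -scalerAl scalerA -mulrA -exprS.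
by rewrite mulSn exprD mulrC.
Qed.

Lemma scommr_prod {I : Type} (r : seq I) (F : I -> A) (d : I -> k) (u : A) :
  (forall i, u * F i = d i *: (F i * u)) ->
  u * \prod_(i <- r) F i = (\prod_(i <- r) d i) *: (\prod_(i <- r) F i * u).
Proof.
move=> uF; elim: r => [|i r IHr]; first by rewrite !big_nil mulr1 mul1r scale1r.
by rewrite !big_cons mulrA uF -scalerAl -[F i * u * _]mulrA IHr -scalerAr scalerA !mulrA.
Qed.

Lemma mul_prod_expr n (x : 'I_n -> A) (c : 'I_n -> 'I_n -> k) (a b : 'I_n -> nat) :
  (forall i j, x i * x j = c i j *: (x j * x i)) ->
  (\prod_(i < n) x i ^+ a i) * (\prod_(i < n) x i ^+ b i) =
  (\prod_(l < n) \prod_(j < n | (j < l)%N) c l j ^+ (a l * b j))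
    *: \prod_(i < n) x i ^+ (a i + b i).
Proof.
elim: n x c a b => [|n IHn] x c a b xc; first by rewrite !big_ord0 mulr1 scale1r.
rewrite !big_ord_recr /=; set w := widen_ord (leqnSn n).
have IH := IHn (fun i => x (w i)) (fun i j => c (w i) (w j)) (fun i => a (w i))
  (fun i => b (w i)) (fun i j => xc (w i) (w j)).
have D := scommr_prod (index_enum 'I_n)
  (fun j => scommrX (xc ord_max (w j)) (a ord_max) (b (w j))).
rewrite mulrA -[_ * x ord_max ^+ _ * _]mulrA D -scalerAr -scalerAl mulrA.
rewrite -[_ * x ord_max ^+ _ * _]mulrA -exprD IH -scalerAl scalerA mulrC.
congr (_ * _ *: _).
- apply: eq_bigr => l _.
  rewrite [RHS]big_mkcond big_ord_recr /= ltnNge (ltnW (ltn_ord l)) mulr1.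
  by rewrite -big_mkcond.
- rewrite [RHS]big_mkcond big_ord_recr /= ltnn mulr1.
  by apply: eq_bigr => j _; rewrite ltn_ord.
Qed.

End SkewCommutation.

Lemma exprz_sub_sign (F : fieldType) (c : F) m p : c != 0 ->
  c ^+ m * (- c^-1) ^+ p = c ^ (m%:Z - p%:Z) * (-1) ^ (- p%:Z).
Proof.
move=> c0; rewrite expfzDr // -exprnP -!exprnN invr_sign -[- c^-1]mulN1r.
by rewrite exprMn exprVn [_ * (c ^+ p)^-1]mulrC mulrA.
Qed.

Lemma basic_cochain_supp (k : fieldType) (A : algType k) n (gT : finGroupType)
  (x : 'I_n -> A) (a : mi n) (g : gT) (b0 : mi n) :
  forall b, b != b0 -> basic_cochain x a g b0 b = 0.
Proof. by move=> b; rewrite /basic_cochain => /negbTE ->. Qed.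

Section SkewGroupAlgebra.
Variables (k : fieldType) (A : algType k) (n : nat) (gT : finGroupType).
Variables (x : 'I_n -> A) (act : gT -> A -> A) (chi : gT -> 'I_n -> k).
Hypothesis act_diag : is_diag_action act x chi.

Lemma act0 g : act g 0 = 0.
Proof.
case: act_diag => lin _ _ _ _; have := lin g 1 0 0.
rewrite !scale1r !addr0 => act0D; apply: (addrI (act g 0)).
by rewrite addr0 -act0D.
Qed.

Lemma act_mono g a : act g (mono x a) = (\prod_(i < n) chi g i ^+ a i) *: mono x a.
Proof.
case: act_diag => _ actM act1 _ actx.
have actX i m : act g (x i ^+ m) = chi g i ^+ m *: x i ^+ m.
  elim: m => [|m IHm]; first by rewrite !expr0 act1 scale1r.
  by rewrite !exprS actM IHm actx -scalerAl -scalerAr scalerA.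
by rewrite /mono (big_morph (act g) (actM g) (act1 g)) -scaler_prod; apply: eq_bigr.
Qed.

Lemma skew_mul0l F : skew_mul act 0 F = 0.
Proof. by apply/ffunP => t; rewrite !ffunE big1 // => g _; rewrite ffunE mul0r. Qed.

Lemma skew_mul0r F : skew_mul act F 0 = 0.
Proof. by apply/ffunP => t; rewrite !ffunE big1 // => g _; rewrite ffunE act0 mulr0. Qed.

Lemma cup_supported q (f f' : mi n -> {ffun gT -> A}) (be ka nu : mi n) :
  (forall b, b != be -> f b = 0) -> (forall b, b != ka -> f' b = 0) ->
  cup q act f f' nu =
  if nu == mi_add be ka then delta_coef q be ka *: skew_mul act (f be) (f' ka) else 0.
Proof.
move=> f_supp f'_supp; rewrite /cup.
have term0 (al ga : mi n) : al != be \/ ga != ka ->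
    delta_coef q al ga *: skew_mul act (f al) (f' ga) = 0.
  by case=> [/f_supp | /f'_supp] ->; rewrite ?skew_mul0l ?skew_mul0r scaler0.
case: eqP => [-> | nu_ne]; last first.
  apply: big1 => a /forallP a_le; apply: term0.
  case: (eqVneq [ffun i => val (a i)] be) => [al_be|]; [right | by left].
  apply/eqP => ga_ka; apply: nu_ne; apply/ffunP => i.
  move/ffunP/(_ i): al_be; move/ffunP/(_ i): ga_ka; rewrite !ffunE => <- <-.
  by rewrite subnKC ?a_le.
set N := (\sum_(i < n) mi_add be ka i)%N.
have be_le i : (be i < N.+1)%N.
  by rewrite ltnS /N (bigD1 i) //= ffunE -addnA leq_addr.
pose a0 : {ffun 'I_n -> 'I_N.+1} := [ffun i => Ordinal (be_le i)].
have a0_be : [ffun i => val (a0 i)] = be :> mi n by apply/ffunP => i; rewrite !ffunE.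
have a0_ka : [ffun i => (mi_add be ka i - a0 i)%N] = ka :> mi n.
  by apply/ffunP => i; rewrite !ffunE addKn.
rewrite (bigD1 a0) /=; last by apply/forallP => i; rewrite !ffunE leq_addr.
rewrite big1 => [|a /andP[_ a_ne]]; last first.
  apply: term0; left; apply: contra_neq a_ne => al_be; apply/ffunP => i; apply: val_inj.
  by have := congr1 (fun b : mi n => b i) al_be; rewrite /= !ffunE /= => ->.
by rewrite addr0 a0_be a0_ka.
Qed.

Variable c : 'I_n -> 'I_n -> k.
Hypothesis x_scomm : forall i j, x i * x j = c i j *: (x j * x i).

Lemma mono_mul a b : mono x a * mono x b =
  (\prod_(l < n) \prod_(j < n | (j < l)%N) c l j ^+ (a l * b j)) *: mono x (mi_add a b).
Proof.
rewrite /mono (mul_prod_expr _ _ x_scomm); congr (_ *: _).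
by apply: eq_bigr => i _; rewrite ffunE.
Qed.

Lemma skew_mul_elt a b g h :
  skew_mul act (skew_elt x a g) (skew_elt x b h) =
  ((\prod_(i < n) chi g i ^+ b i)
     * \prod_(l < n) \prod_(j < n | (j < l)%N) c l j ^+ (a l * b j))
    *: skew_elt x (mi_add a b) (g * h).
Proof.
apply/ffunP => t; rewrite !ffunE (bigD1 g) //= big1 => [|g' /negbTE g'g]; last first.
  by rewrite ffunE g'g mul0r.
rewrite !ffunE eqxx addr0 (canF_eq (mulKVg g)).
case: eqP => _; last by rewrite act0 mulr0 scaler0.
by rewrite act_mono -scalerAr mono_mul scalerA.
Qed.

End SkewGroupAlgebra.

Lemma delta_coefM_sign (k : fieldType) n (q : 'I_n -> 'I_n -> k) (be ka al ga : mi n) :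
  (forall i j, q i j != 0) -> (forall i j, q j i = (q i j)^-1) ->
  delta_coef q be ka * \prod_(l < n) \prod_(j < n | (j < l)%N) (- q l j) ^+ (al l * ga j) =
  \prod_(l < n) \prod_(j < n | (j < l)%N)
    (q j l ^ ((ka j * be l)%:Z - (ga j * al l)%:Z) * (-1) ^ (- (ga j * al l)%:Z)).
Proof.
move=> q_neq0 qV; rewrite /delta_coef -big_split; apply: eq_bigr => l _.
rewrite -big_split; apply: eq_bigr => j _.
by rewrite /= (qV j l) (mulnC (al l)) exprz_sub_sign.
Qed.

Theorem theorem3p4 (k : fieldType) (A : algType k) (n : nat) (gT : finGroupType)
  (q : 'I_n -> 'I_n -> k) (x : 'I_n -> A) (act : gT -> A -> A)
  (chi : gT -> 'I_n -> k) :
  [pchar k] =i pred0 ->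
  (0 < n)%N ->
  (forall i j, q i j != 0) ->
  (forall i j, q j i = (q i j)^-1) ->
  (forall i, q i i = -1) ->
  is_quantum_exterior q x ->
  is_diag_action act x chi ->
  forall (al ga : {ffun 'I_n -> bool}) (be ka : mi n) (g h : gT) (nu : mi n),
    cup q act (basic_cochain x (b2mi al) g be) (basic_cochain x (b2mi ga) h ka) nu =
    (\prod_(l < n)
       (chi g l ^+ ga l *
        \prod_(kk < n | (kk < l)%N)
          (q kk l ^ ((ka kk * be l)%:Z - (ga kk * al l)%:Z)
           * (-1) ^ (- (ga kk * al l)%:Z))))
    *: basic_cochain x (mi_add (b2mi al) (b2mi ga)) (g * h)%g (mi_add be ka) nu.
Proof.
move=> _ _ q_neq0 qV _ [x_scomm _ _ _] act_diag al ga be ka g h nu.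
rewrite (cup_supported act_diag q nu (basic_cochain_supp x _ g (b0 := be))
  (basic_cochain_supp x _ h (b0 := ka))).
rewrite /basic_cochain !eqxx (skew_mul_elt act_diag x_scomm).
case: eqP => _; last by rewrite scaler0.
rewrite scalerA big_split mulrCA delta_coefM_sign //.
congr (_ * _ *: _); apply: eq_bigr => l _; first by rewrite ffunE.
by apply: eq_bigr => j _; rewrite !ffunE.
Qed.
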